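(* Let $n,k,j,i$ be integers with $n\ge k\ge 1$, $0\le j<n$, $i\ge 1$. Let $f^*_{(n,k)\setminus(j),i}(q)$ be the sum of $q^{\mathrm{maj}(\tau)}$ over standard Young tableaux $\tau$ of skew shape $(n,k)\setminus(j)$ with exactly $i$ descents in which the entry $1$ lies in the top row. Then $$f^*_{(n,k)\setminus(j),i}(q) = q^{i^2}\left( \begin{bmatrix} n-j \\ i \end{bmatrix}_q \begin{bmatrix} k-1 \\ i-1 \end{bmatrix}_q - \begin{bmatrix} n \\ i-1 \end{bmatrix}_q \begin{bmatrix} k-j-1 \\ i \end{bmatrix}_q \right).$$
   Context: The skew shape $(n,k)\setminus(j)$ consists of a top row occupying columns $j+1,\dots,n$ and a bottom row occupying columns $1,\dots,k$. A standard Young tableau of this shape is a filling with $1,\dots,n+k-j$, each used once, increasing along rows left to right and down columns. It has a descent at $m$ if $m+1$ lies in a strictly lower row than $m$; $\mathrm{maj}$ is the sum of the descents. The $q$-binomial coefficient is $\begin{bmatrix} M \\ N \end{bmatrix}_q = \frac{(q)_M}{(q)_N(q)_{M-N}}$ with $(q)_m=(1-q)\cdots(1-q^m)$ when $0\le N\le M$ are integers, and $0$ otherwise. *)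

From HB Require Import structures.
From mathcomp Require Import all_boot all_order all_algebra.
Set Implicit Arguments. Unset Strict Implicit. Unset Printing Implicit Defensive.
Import Order.TTheory GRing.Theory Num.Theory.

(* A filling of the skew shape (n,k)\(j): the top row has n-j cells
   (top cell p : 'I_(n-j) sits in column j+1+p), the bottom row has k cells
   (bottom cell c : 'I_k sits in column c+1).  Entries are stored 0-based:
   an ordinal u : 'I_(n+k-j) stands for the entry u+1. *)
Definition filling (n k j : nat) : finType :=
  ({ffun 'I_(n - j) -> 'I_(n + k - j)} * {ffun 'I_k -> 'I_(n + k - j)})%type.

Definition topF n k j (t : filling n k j) := t.1.
Definition botF n k j (t : filling n k j) := t.2.

Definition isSYT n k j (t : filling n k j) : bool :=
  let T := topF t in let B := botF t in
  [&&
      [forall p : 'I_(n - j), forall q : 'I_(n - j),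
         (p < q)%N ==> (T p < T q)%N],
      [forall c : 'I_k, forall d : 'I_k, (c < d)%N ==> (B c < B d)%N],
      [forall p : 'I_(n - j), forall c : 'I_k, T p != B c],
      [forall u : 'I_(n + k - j),
         [exists p, T p == u] || [exists c, B c == u]] &
      (* columns increase downwards: same column iff j+1+p = c+1 *)
      [forall p : 'I_(n - j), forall c : 'I_k,
         (j + p == c)%N ==> (T p < B c)%N]].

Definition inTop n k j (t : filling n k j) (m : nat) : bool :=
  [exists p, (nat_of_ord (topF t p)).+1 == m].
Definition inBot n k j (t : filling n k j) (m : nat) : bool :=
  [exists c, (nat_of_ord (botF t c)).+1 == m].

(* descent at m : m+1 lies in a strictly lower row than m *)
Definition isDescent n k j (t : filling n k j) (m : nat) : bool :=
  inTop t m && inBot t m.+1.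

Definition descents n k j (t : filling n k j) : seq nat :=
  [seq m <- iota 1 (n + k - j) | isDescent t m].

Definition maj n k j (t : filling n k j) : nat := \sum_(m <- descents t) m.
Definition ndes n k j (t : filling n k j) : nat := size (descents t).

Local Open Scope ring_scope.

Definition fstar (n k j i : nat) : {poly rat} :=
  \sum_(t : filling n k j | [&& isSYT t, ndes t == i & inTop t 1])
     'X^(maj t).

Definition qpoch (m : nat) : {poly rat} :=
  \prod_(1 <= a < m.+1) (1 - 'X^a).

Definition qbinom (M N : nat) : {poly rat} :=
  if (N <= M)%N then qpoch M %/ (qpoch N * qpoch (M - N)) else 0.

From mathcomp Require Import all_boot all_order all_algebra.
From mathcomp Require Import ring zify.
Set Implicit Arguments. Unset Strict Implicit. Unset Printing Implicit Defensive.
Import GRing.Theory.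
Local Open Scope ring_scope.

(* A tableau of shape (n,k)\(j) is determined by its row word, whose u-th letter
   tells whether u lies in the top row.  Column strictness becomes a ballot
   condition on the word, descents of the tableau are the places where a top
   letter is followed by a bottom letter, and 1 is in the top row iff the word
   starts with a top letter.  Splitting the admissible words according to their
   last letter gives a recurrence in the row lengths a = n - j and b = k; the two
   q-Pascal rules show that the closed form satisfies the same recurrence, and
   both sides vanish on the boundary b = 0 and b = a + j + 1. *)

Fixpoint qbin (m r : nat) : {poly rat} :=
  match m, r with
  | _, 0 => 1
  | 0, _.+1 => 0
  | m'.+1, r'.+1 => qbin m' r' + 'X^(r'.+1) * qbin m' r'.+1
  end.
Arguments qbin : simpl never.

Lemma qbinS m r : qbin m.+1 r.+1 = qbin m r + 'X^(r.+1) * qbin m r.+1.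
Proof. by []. Qed.

Lemma qbin0 m : qbin m 0 = 1.
Proof. by case: m. Qed.

Lemma qbin_small m r : (m < r)%N -> qbin m r = 0.
Proof.
elim: m r => [|m IHm] [|r] // lt_mr.
by rewrite qbinS !IHm ?mulr0 ?addr0 // ltnW.
Qed.

Lemma qbinn m : qbin m m = 1.
Proof. by elim: m => // m IHm; rewrite qbinS IHm qbin_small // mulr0 addr0. Qed.

Lemma qbin_neq0_leq m r : qbin m r != 0 -> (r <= m)%N.
Proof. by case: leqP => // lt_mr; rewrite qbin_small // eqxx. Qed.

Lemma qpoch0 : qpoch 0 = 1.
Proof. by rewrite /qpoch big_geq. Qed.

Lemma qpochS m : qpoch m.+1 = qpoch m * (1 - 'X^(m.+1)).
Proof. by rewrite /qpoch big_nat_recr. Qed.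

Lemma qpoch_neq0 m : qpoch m != 0.
Proof.
elim: m => [|m IHm]; first by rewrite qpoch0 oner_neq0.
rewrite qpochS mulf_neq0 //; apply/eqP => /(congr1 (fun p : {poly rat} => p`_0)).
by rewrite coefB coef1 coefXn coef0 subr0 => /eqP; rewrite oner_eq0.
Qed.

Lemma qbin_qpoch m r : (r <= m)%N -> qbin m r * qpoch r * qpoch (m - r) = qpoch m.
Proof.
elim: m r => [|m IHm] [|r] //= le_rm; rewrite ?qbin0 ?qpoch0 ?mul1r ?subn0 //.
rewrite ltnS in le_rm; rewrite subSS qbinS qpochS.
have [lt_rm | ge_rm] := ltnP r m; last first.
  have -> : m = r by apply/eqP; rewrite eqn_leq le_rm ge_rm.
  by rewrite qbinn qbin_small // mulr0 addr0 subnn qpoch0 mulr1 mul1r qpochS.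
have := IHm r.+1 lt_rm; have := IHm r le_rm.
rewrite -(subnSK lt_rm) qpochS; set d := (m - r.+1)%N => IH1 IH2.
have X_exp : 'X^(m.+1) = 'X^(r.+1) * 'X^(d.+1) :> {poly rat}.
  by rewrite -exprD /d addSn subnSK // subnKC // ltnW.
transitivity (qpoch m * (1 - 'X^(r.+1)) + 'X^(r.+1) * (qpoch m * (1 - 'X^(d.+1)))).
  by rewrite -{1}IH1 -IH2 qpochS; ring.
by rewrite qpochS X_exp; ring.
Qed.

Lemma qbinomE M N : qbinom M N = qbin M N.
Proof.
rewrite /qbinom; case: ifPn => [le_NM | ]; last by rewrite -ltnNge => /qbin_small.
by rewrite -(qbin_qpoch le_NM) -mulrA mulpK // mulf_neq0 // qpoch_neq0.
Qed.

Lemma qbin_sym m r : (r <= m)%N -> qbin m r = qbin m (m - r).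
Proof.
move=> le_rm; apply: (mulIf (qpoch_neq0 (m - r))); apply: (mulIf (qpoch_neq0 r)).
have := qbin_qpoch (leq_subr r m); rewrite subKn // => ->.
by rewrite -(qbin_qpoch le_rm); ring.
Qed.

Lemma qbinS_dual m r : qbin m.+1 r.+1 = qbin m r.+1 + 'X^(m - r) * qbin m r.
Proof.
have [lt_rm | gt_rm | ->] := ltngtP r m; last first.
- by rewrite subnn qbinn qbinn qbin_small // add0r mulr1.
- by rewrite !qbin_small // ?mulr0 ?addr0 // ltnW.
rewrite (qbin_sym (ltnW lt_rm : r.+1 <= m.+1)%N) subSS -(subnSK lt_rm) qbinS.
rewrite (subnSK lt_rm) -(qbin_sym (ltnW lt_rm)) (qbin_sym (leq_subr r.+1 m)).
by rewrite subKn // addrC.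
Qed.

Definition qbin_sub (m d r : nat) : {poly rat} :=
  if (d <= m)%N then qbin (m - d) r else 0.

Lemma qbin_sub_neq0_leq m d r : qbin_sub m d r != 0 -> (d + r <= m)%N.
Proof.
rewrite /qbin_sub; case: leqP => [le_dm /qbin_neq0_leq | _]; last by rewrite eqxx.
by rewrite leq_subRL.
Qed.

Lemma qbin_subS_dual m d r :
  qbin_sub m.+1 d r.+1 - qbin_sub m d r.+1 = 'X^(m - d - r) * qbin_sub m d r.
Proof.
rewrite /qbin_sub; have [lt_md | lt_dm | ->] := ltngtP m d.
- rewrite /= mulr0 subr0; case: ifP => // _.
  by rewrite qbin_small //; lia.
- have le_dm := ltnW lt_dm.
  by rewrite leqW // subSn // qbinS_dual addrAC subrr add0r.
- by rewrite leqnSn subSnn subnn (qbinS_dual 0) addrAC subrr add0r.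
Qed.

Lemma mulXn_rearrange (e1 e2 e3 f1 f2 : nat) (p q : {poly rat}) :
  (p != 0 -> q != 0 -> (e1 + e2 + e3 = f1 + f2)%N) ->
  'X^e1 * ('X^e2 * p * ('X^e3 * q)) = 'X^f1 * ('X^f2 * (p * q)).
Proof.
have [-> | _] := eqVneq p 0; first by rewrite !(mulr0, mul0r).
have [-> | _] := eqVneq q 0; first by rewrite !(mulr0, mul0r).
move=> /(_ isT isT) e_eq.
transitivity ('X^(e1 + e2 + e3) * (p * q)); first by rewrite !exprD; ring.
by rewrite e_eq exprD -mulrA.
Qed.

(* The right-hand side of the theorem for rows of lengths a = n - j and b = k.
   Using [qbin_sub] instead of truncated subtraction makes the terms vanish for
   b = 0 and b <= j, so that [closed_form_rec] holds without side conditions. *)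
Definition closed_form (j a b i : nat) : {poly rat} :=
  'X^(i ^ 2) * (qbin a i * qbin_sub b 1 i.-1 - qbin (a + j)%N i.-1 * qbin_sub b j.+1 i).

Lemma closed_form_b0 j a i : closed_form j a 0 i = 0.
Proof. by rewrite /closed_form /qbin_sub !mulr0 subrr mulr0. Qed.

Lemma closed_form_full j a i : closed_form j a (a + j).+1%N i = 0.
Proof.
rewrite /closed_form /qbin_sub !ltnS leq_addl /= subn1 subSS addnK /=.
by rewrite [qbin a i * _]mulrC subrr mulr0.
Qed.

Lemma closed_form_a0 j b i : (b <= j.+1)%N -> closed_form j 0 b i.+1 = 0.
Proof.
move=> le_bj; rewrite /closed_form /qbin_sub qbin_small // mul0r sub0r.
case: ifP => _; last by rewrite mulr0 oppr0 mulr0.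
have -> : (b - j.+1 = 0)%N by apply/eqP; rewrite subn_eq0.
by rewrite (qbin_small (ltn0Sn i)) mulr0 oppr0 mulr0.
Qed.

Lemma closed_form_rec j a b i :
  closed_form j a.+1 b.+1 i.+1 - closed_form j a b.+1 i.+1
    - closed_form j a.+1 b i.+1 + closed_form j a b i.+1
  = 'X^(a.+1 + b)%N * (if i is i'.+1 then closed_form j a b i else (b == 0)%:R).
Proof.
have -> : closed_form j a.+1 b.+1 i.+1 - closed_form j a b.+1 i.+1
          - closed_form j a.+1 b i.+1 + closed_form j a b i.+1
  = 'X^(i.+1 ^ 2) *
      ((qbin a.+1 i.+1 - qbin a i.+1) * (qbin_sub b.+1 1 i - qbin_sub b 1 i)
       - (qbin (a.+1 + j)%N i - qbin (a + j)%N i)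
         * (qbin_sub b.+1 j.+1 i.+1 - qbin_sub b j.+1 i.+1)).
  by rewrite /closed_form; ring.
rewrite qbinS_dual addrAC subrr add0r qbin_subS_dual.
case: i => [|i].
  rewrite !qbin0 subrr mul0r subr0 /qbin_sub !qbin0 /= mulr1 subn0 exp1n.
  case: b => [|b] /=; last by rewrite subrr !mulr0.
  by rewrite subr0 !mulr1 addn0 -exprD add1n.
rewrite addSn qbinS_dual addrAC subrr add0r qbin_subS_dual mulrBr.
rewrite (@mulXn_rearrange _ _ _ (a.+1 + b)%N (i.+1 ^ 2)%N); last first.
  by move=> /qbin_neq0_leq ? /qbin_sub_neq0_leq ?; lia.
rewrite (@mulXn_rearrange _ _ _ (a.+1 + b)%N (i.+1 ^ 2)%N); last first.
  by move=> /qbin_neq0_leq ? /qbin_sub_neq0_leq ?; lia.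
by rewrite -mulrBr /closed_form -mulrBr.
Qed.

Fixpoint words (N : nat) : seq (seq bool) :=
  if N is N'.+1 then flatten [seq [:: rcons w true; rcons w false] | w <- words N']
  else [:: [::]].

Lemma mem_words N w : (w \in words N) = (size w == N).
Proof.
elim: N w => [|N IHN] w /=; first by rewrite inE size_eq0.
apply/flattenP/idP => [[s /mapP [w' w'_in ->]] | ].
  by rewrite !inE => /orP [] /eqP ->; rewrite size_rcons eqSS -IHN.
case/lastP: w => [|w x] //; rewrite size_rcons eqSS -IHN => w_in.
exists [:: rcons w true; rcons w false]; first by apply/mapP; exists w.
by case: x; rewrite !inE eqxx ?orbT.
Qed.

Lemma uniq_words N : uniq (words N).
Proof.
elim: N => [|N] //=; elim: (words N) => [|w s IHs] //= /andP [w_notin s_uniq].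
have rcons_notin x : rcons w x \notin flatten [seq [:: rcons v true; rcons v false] | v <- s].
  apply/negP => /flattenP [t /mapP [v v_in ->]].
  by rewrite !inE => /orP [] /eqP /rcons_inj [w_eq _]; rewrite w_eq v_in in w_notin.
rewrite IHs // in_cons negb_or !rcons_notin !andbT.
by apply/eqP => /rcons_inj [].
Qed.

Lemma big_words_rcons N (P : pred (seq bool)) (F : seq bool -> {poly rat}) :
  \sum_(w <- words N.+1 | P w) F w =
  \sum_(w <- words N) ((if P (rcons w true) then F (rcons w true) else 0)
                       + (if P (rcons w false) then F (rcons w false) else 0)).
Proof.
rewrite big_mkcond /= big_flatten big_map /=.
by apply: eq_bigr => w _; rewrite !big_cons big_nil addr0.
Qed.

Lemma iota_rcons m n : iota m n.+1 = rcons (iota m n) (m + n)%N.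
Proof. by rewrite -addn1 iotaD cats1. Qed.

Lemma count_rcons (T : Type) (p : pred T) s x : count p (rcons s x) = (count p s + p x)%N.
Proof. by rewrite -cats1 count_cat /= addn0. Qed.

Definition positions (b : bool) (w : seq bool) : seq nat :=
  [seq u <- iota 0 (size w) | nth false w u == b].

Lemma positions_rcons b w x :
  positions b (rcons w x) = if x == b then rcons (positions b w) (size w) else positions b w.
Proof.
rewrite /positions size_rcons iota_rcons filter_rcons nth_rcons ltnn eqxx.
congr (if _ then rcons _ _ else _); apply: eq_in_filter => u;
  by rewrite mem_iota add0n => /andP [_ lt_uw]; rewrite nth_rcons lt_uw.
Qed.

Lemma mem_positions b w u : (u \in positions b w) = (u < size w)%N && (nth false w u == b).
Proof. by rewrite mem_filter mem_iota add0n andbC. Qed.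

Lemma size_positions b w : size (positions b w) = count_mem b w.
Proof.
rewrite /positions size_filter -[in RHS](mkseq_nth false w) /mkseq count_map.
by apply: eq_count => u /=; rewrite eq_sym.
Qed.

Lemma sorted_positions b w : sorted ltn (positions b w).
Proof. exact/sorted_filter/iota_ltn_sorted/ltn_trans. Qed.

Lemma positions_lt b w u : u \in positions b w -> (u < size w)%N.
Proof. by rewrite mem_positions => /andP []. Qed.

(* The column condition on 0-based positions: the c-th bottom letter, c >= j,
   comes after the (c - j)-th top letter. *)
Definition ballot_pos (j : nat) (P Q : seq nat) : bool :=
  all (fun c => (j <= c)%N ==> ((c - j < size P)%N && (nth 0 P (c - j) < nth 0 Q c)%N))
      (iota 0 (size Q)).

Definition ballot (j : nat) (w : seq bool) : bool :=
  ballot_pos j (positions true w) (positions false w).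

Lemma ballot_pos_rcons_top j P Q u : (forall c, c \in Q -> (c < u)%N) ->
  ballot_pos j (rcons P u) Q = ballot_pos j P Q.
Proof.
move=> Q_lt; apply: eq_in_all => c; rewrite mem_iota add0n => /andP [_ lt_cQ].
case: (j <= c)%N => //=; rewrite size_rcons nth_rcons ltnS leq_eqVlt.
case: ltngtP => //= _; apply/negbTE; rewrite -leqNgt ltnW //.
exact/Q_lt/mem_nth.
Qed.

Lemma ballot_pos_rcons_bot j P Q u : (forall c, c \in P -> (c < u)%N) ->
  ballot_pos j P (rcons Q u)
  = ballot_pos j P Q && ((j <= size Q) ==> (size Q - j < size P))%N.
Proof.
move=> P_lt; rewrite /ballot_pos size_rcons iota_rcons all_rcons andbC.
congr andb.
  apply: eq_in_all => c; rewrite mem_iota add0n => /andP [_ lt_cQ].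
  by rewrite nth_rcons lt_cQ.
rewrite nth_rcons ltnn eqxx; case: (j <= size Q)%N => //=.
case lt_P: (size Q - j < size P)%N => //=.
exact/P_lt/mem_nth.
Qed.

Lemma ballot_rcons_top j w : ballot j (rcons w true) = ballot j w.
Proof.
rewrite /ballot !positions_rcons /=.
by apply: ballot_pos_rcons_top => c /positions_lt.
Qed.

Lemma ballot_rcons_bot j w :
  ballot j (rcons w false) = ballot j w && (count_mem false w < count_mem true w + j)%N.
Proof.
rewrite /ballot !positions_rcons /= ballot_pos_rcons_bot; last by move=> c /positions_lt.
by rewrite !size_positions; congr andb; case: leqP => /= ?; lia.
Qed.

(* The default [true] rules out a descent at the last letter. *)
Definition wdescents (w : seq bool) : seq nat :=
  [seq m <- iota 1 (size w) | nth false w m.-1 && ~~ nth true w m].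
Definition wmaj (w : seq bool) : nat := (\sum_(m <- wdescents w) m)%N.
Definition wdes (w : seq bool) : nat := size (wdescents w).

Lemma wdescents_rcons w x : wdescents (rcons w x) =
  if last false w && ~~ x then rcons (wdescents w) (size w) else wdescents w.
Proof.
case/lastP: w => [|v y]; first by rewrite /wdescents /= andbF.
set w := rcons v y; have size_w : size w = (size v).+1 by rewrite size_rcons.
have nth_wx_last z : nth z (rcons w x) (size v).+1 = x.
  by rewrite nth_rcons size_w ltnn eqxx.
have nth_wx_y z : nth z (rcons w x) (size v) = y.
  by rewrite nth_rcons size_w ltnSn nth_rcons ltnn eqxx.
have nth_w_y z : nth z w (size v) = y by rewrite nth_rcons ltnn eqxx.
have same_pred : {in iota 1 (size v), (fun m => nth false (rcons w x) m.-1
    && ~~ nth true (rcons w x) m) =1 (fun m => nth false w m.-1 && ~~ nth true w m)}.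
  move=> m; rewrite mem_iota add1n ltnS => /andP [_ le_mv] /=.
  have lt_mw : (m < size w)%N by rewrite size_w ltnS.
  by rewrite !nth_rcons lt_mw (leq_ltn_trans (leq_pred m) lt_mw).
rewrite last_rcons /wdescents size_rcons size_w !iota_rcons !filter_rcons !add1n /=.
rewrite ?add0n !nth_wx_last !nth_wx_y !nth_w_y !(nth_default true) ?size_rcons ?size_w //=.
by rewrite !andbF (eq_in_filter same_pred).
Qed.

Lemma wdes_rcons w x : wdes (rcons w x) = (wdes w + (last false w && ~~ x))%N.
Proof.
by rewrite /wdes wdescents_rcons; case: ifP => _; rewrite ?size_rcons /= ?addn1 ?addn0.
Qed.

Lemma wmaj_rcons w x :
  wmaj (rcons w x) = (wmaj w + (if last false w && ~~ x then size w else 0))%N.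
Proof.
by rewrite /wmaj wdescents_rcons; case: ifP => _; rewrite ?big_rcons ?addn0.
Qed.

Definition admissible (j a i : nat) (w : seq bool) : bool :=
  [&& count_mem true w == a, head false w, ballot j w & wdes w == i].

Definition wgen (j a b i : nat) : {poly rat} :=
  \sum_(w <- words (a + b)%N | admissible j a i w) 'X^(wmaj w).

Definition wgen_last (x : bool) (j a b i : nat) : {poly rat} :=
  \sum_(w <- words (a + b)%N | admissible j a i w && (last false w == x)) 'X^(wmaj w).

Lemma wgen_split j a b i : wgen j a b i = wgen_last true j a b i + wgen_last false j a b i.
Proof.
rewrite /wgen (bigID (fun w => last false w)) /=.
by congr (_ + _); apply: eq_bigl => w; rewrite ?eqb_id ?eqbF_neg.
Qed.

Lemma count_mem_false w : count_mem false w = (size w - count_mem true w)%N.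
Proof.
rewrite -(count_predC (pred1 true) w) addKn.
by apply: eq_count => -[].
Qed.

Lemma wgen_last_top j a b i : (0 < a)%N -> wgen_last true j a.+1 b i = wgen j a b i.
Proof.
move=> a_gt0; rewrite /wgen_last /wgen addSn big_words_rcons [RHS]big_mkcond.
apply: eq_bigr => w _; rewrite !last_rcons !eqxx andbF addr0 andbT.
case: w => [|x w]; first by rewrite /admissible /= !andbF; case: a a_gt0.
rewrite wmaj_rcons andbF addn0 /admissible wdes_rcons andbF addn0.
by rewrite ballot_rcons_top count_rcons addn1 eqSS.
Qed.

Lemma wgen_last_top1 j b i : wgen_last true j 1 b i = ((b == 0) && (i == 0))%:R.
Proof.
case: b => [|b].
  rewrite /wgen_last /= !big_cons big_nil /= /admissible /wmaj /wdes /wdescents /=.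
  by rewrite big_nil expr0 addr0 eqxx andbT eq_sym; case: (i == 0).
rewrite /wgen_last add1n big_words_rcons big1_seq // => w /andP [_].
rewrite mem_words => /eqP size_w.
rewrite !last_rcons andbF addr0 andbT /admissible count_rcons addn1 eqSS.
by case: w size_w => [|[] w] //= _; rewrite andbF.
Qed.

Lemma wgen_last_bot0 j a i : (0 < a)%N -> wgen_last false j a 0 i = 0.
Proof.
case: a => // a _; rewrite /wgen_last addn0 big_words_rcons big1_seq // => w /andP [_].
rewrite mem_words => /eqP size_w; rewrite !last_rcons andbF andbT /admissible count_rcons addn0.
suff -> : (count_mem true w == a.+1) = false by rewrite addr0.
by apply/negbTE; rewrite neq_ltn -size_w ltnS count_size.
Qed.

Lemma head_rcons_bot w : head false (rcons w false) = head false w.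
Proof. by case: w. Qed.

Lemma admissible_rcons_bot j a i w :
  admissible j a i (rcons w false) =
  [&& count_mem true w == a, head false w, ballot j w,
      (count_mem false w < a + j)%N & (wdes w + last false w == i)%N].
Proof.
rewrite /admissible count_rcons addn0 head_rcons_bot ballot_rcons_bot wdes_rcons andbT.
by case: eqP => //= ->; rewrite -andbA.
Qed.

Lemma wgen_last_botS j a b i : (0 < a)%N ->
  wgen_last false j a b.+1 i =
  if (b.+1 <= a + j)%N
  then wgen_last false j a b i
       + (if i is i'.+1 then 'X^(a + b)%N * wgen_last true j a b i' else 0)
  else 0.
Proof.
move=> a_gt0; rewrite /wgen_last addnS big_words_rcons.
under eq_bigr => w _ do rewrite !last_rcons andbF add0r andbT admissible_rcons_bot.
pose top_term i' w : {poly rat} :=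
  if admissible j a i' w && last false w then 'X^(a + b)%N * 'X^(wmaj w) else 0.
rewrite (eq_big_seq (fun w => if (b < a + j)%N
    then (if admissible j a i w && ~~ last false w then 'X^(wmaj w) else 0)
         + (if i is i'.+1 then top_term i' w else 0)
    else 0)); last first.
  move=> w w_in; have := w_in; rewrite mem_words => /eqP size_w.
  rewrite count_mem_false size_w wmaj_rcons andbT /top_term /admissible.
  case: eqP => [-> | _] /=; last by case: ifP; case: i => //= *; rewrite addr0.
  rewrite addKn; case: ltnP => _ /=; last by rewrite !andbF.
  case: (last false w) => /=; last by case: i => [|i]; rewrite !addn0 andbT ?andbF addr0.
  case: i => [|i] /=; first by rewrite addn1 !andbF add0r.
  by rewrite addn1 eqSS !andbT size_w -exprD addnC andbF add0r.
case: ifP => _; last by rewrite big1.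
rewrite big_split /=; congr (_ + _).
  by rewrite [RHS]big_mkcond; apply: eq_bigr => w _; rewrite eqbF_neg.
case: i => [|i]; first by rewrite big1.
rewrite mulr_sumr [RHS]big_mkcond; apply: eq_bigr => w _.
by rewrite /top_term eqb_id; case: ifP; rewrite ?mulr0.
Qed.

Lemma wgen_overfull j a b i : (0 < a)%N -> (a + j < b)%N -> wgen j a b i = 0.
Proof.
case: b => [|b] //; elim: a => [//|a IHa] _ lt_ajb.
rewrite wgen_split wgen_last_botS // leqNgt lt_ajb addr0.
case: a IHa lt_ajb => [|a] IHa lt_ajb; first by rewrite wgen_last_top1.
by rewrite wgen_last_top // IHa // (leq_trans _ lt_ajb).
Qed.

Lemma wgen_last_bot_des0 j a b : (0 < a)%N -> wgen_last false j a b 0 = 0.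
Proof.
move=> a_gt0; elim: b => [|b IHb]; first exact: wgen_last_bot0.
by rewrite wgen_last_botS // IHb addr0; case: ifP.
Qed.

Lemma wgen_last_top_des0 j a b : (0 < a)%N -> wgen_last true j a b 0 = (b == 0)%:R.
Proof.
elim: a => [//|[|a] IHa] _; first by rewrite wgen_last_top1 andbT.
by rewrite wgen_last_top // wgen_split wgen_last_bot_des0 // addr0 IHa.
Qed.

Lemma wgen_last_top_b0 j a i : (0 < a)%N -> (0 < i)%N -> wgen_last true j a 0 i = 0.
Proof.
move=> + i_gt0; elim: a => [//|[|a] IHa] _.
  by rewrite wgen_last_top1 eqxx /= eqn0Ngt i_gt0.
by rewrite wgen_last_top // wgen_split wgen_last_bot0 // addr0 IHa.
Qed.

Lemma wgen_closed_form j b a i : (0 < a)%N -> (0 < i)%N -> (b <= a + j.+1)%N ->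
  wgen j a b i = closed_form j a b i.
Proof.
elim: b a i => [|b IHb] a i a_gt0 i_gt0 le_b.
  by rewrite wgen_split wgen_last_bot0 // wgen_last_top_b0 // addr0 closed_form_b0.
have top_closed a' i' : (b <= a' + j.+1)%N ->
    wgen_last true j a'.+1 b i'.+1 = closed_form j a' b i'.+1.
  case: a' => [|a'] le_b'; last by rewrite wgen_last_top // IHb.
  by rewrite wgen_last_top1 andbF closed_form_a0.
case: i i_gt0 => [//|i] _; elim: a a_gt0 le_b => [//|a IHa] _ le_b.
have [le_bS | lt_bS] := leqP b.+1 (a.+1 + j); last first.
  have -> : b.+1 = (a.+1 + j).+1%N by apply/eqP; rewrite eqn_leq lt_bS -addnS le_b.
  by rewrite wgen_overfull ?closed_form_full.
have top_bS : wgen_last true j a.+1 b.+1 i.+1 = closed_form j a b.+1 i.+1.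
  case: a IHa {le_b} le_bS => [|a] IHa le_bS; last by rewrite wgen_last_top // IHa //; lia.
  by rewrite wgen_last_top1 andbF closed_form_a0.
have le_b_aj : (b <= a + j.+1)%N by lia.
have bot_b : wgen_last false j a.+1 b i.+1 = closed_form j a.+1 b i.+1 - closed_form j a b i.+1.
  rewrite -(IHb a.+1 i.+1) -?(top_closed a i) //; last by rewrite addSn ltnW.
  by rewrite wgen_split addrC addKr.
have top_b : wgen_last true j a.+1 b i =
    if i is i'.+1 then closed_form j a b i else (b == 0)%:R.
  by case: i {IHa bot_b top_bS} => [|i]; rewrite ?wgen_last_top_des0 ?top_closed.
rewrite wgen_split wgen_last_botS // le_bS top_bS bot_b top_b -closed_form_rec.
by ring.
Qed.

Lemma sorted_map_ord m (f : 'I_m -> nat) :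
  {homo f : p q / (p < q)%N} -> sorted ltn [seq f p | p <- enum 'I_m].
Proof.
move=> f_incr; rewrite sorted_map.
have : sorted ltn [seq nat_of_ord p | p <- enum 'I_m] by rewrite val_enum_ord iota_ltn_sorted.
by rewrite sorted_map; apply: sub_sorted => p q /=; apply: f_incr.
Qed.

Lemma nth_map_ord m (f : 'I_m -> nat) (p : 'I_m) : nth 0%N [seq f q | q <- enum 'I_m] p = f p.
Proof. by rewrite (nth_map p) ?size_enum_ord // nth_ord_enum. Qed.

Section Tableaux.
Variables n k j : nat.
Local Notation N := (n + k - j)%N.
Local Notation F := (filling n k j).

Lemma isSYT_props (t : F) : isSYT t ->
  [/\ {homo topF t : p q / (p < q)%N >-> (p < q)%N},
      {homo botF t : c d / (c < d)%N >-> (c < d)%N},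
      (forall p c, topF t p != botF t c),
      (forall u : 'I_N, (exists p, topF t p = u) \/ (exists c, botF t c = u)) &
      (forall (p : 'I_(n - j)) (c : 'I_k), (j + p)%N = c -> (topF t p < botF t c)%N)].
Proof.
case/and5P => /forallP top_incr /forallP bot_incr /forallP top_bot /forallP onto /forallP col.
split.
- by move=> p q; move/forallP: (top_incr p) => /(_ q) /implyP.
- by move=> c d; move/forallP: (bot_incr c) => /(_ d) /implyP.
- by move=> p c; move/forallP: (top_bot p) => /(_ c).
- by move=> u; case/orP: (onto u) => /existsP [x /eqP <-]; [left | right]; exists x.
- by move=> p c jp_c; move/forallP: (col p) => /(_ c) /implyP; apply; apply/eqP.
Qed.

Definition word_of (t : F) : seq bool := [seq inTop t u.+1 | u <- iota 0 N].

Lemma size_word_of (t : F) : size (word_of t) = N.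
Proof. by rewrite size_map size_iota. Qed.

Lemma inTopE (t : F) u : inTop t u.+1 = [exists p, nat_of_ord (topF t p) == u].
Proof. by apply: eq_existsb => p; rewrite eqSS. Qed.

Lemma inBotE (t : F) u : inBot t u.+1 = [exists c, nat_of_ord (botF t c) == u].
Proof. by apply: eq_existsb => c; rewrite eqSS. Qed.

Lemma nth_word_of (t : F) u : (u < N)%N -> nth false (word_of t) u = inTop t u.+1.
Proof. by move=> lt_uN; rewrite (nth_map 0%N) ?size_iota // nth_iota. Qed.

Lemma inBot_inTop (t : F) u : isSYT t -> (u < N)%N -> inBot t u.+1 = ~~ inTop t u.+1.
Proof.
case/isSYT_props => _ _ top_bot onto _ lt_uN; rewrite inBotE inTopE.
have disjoint p c : nat_of_ord (topF t p) = u -> nat_of_ord (botF t c) <> u.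
  by move=> <- /val_inj eq_cp; move/eqP: (top_bot p c); rewrite eq_cp.
case: (onto (Ordinal lt_uN)) => [[p /(congr1 val) /= top_p] | [c /(congr1 val) /= bot_c]].
- rewrite (introT existsP (ex_intro _ p (introT eqP top_p))).
  by apply/existsP => -[c /eqP /(disjoint p c top_p)].
- rewrite (introT existsP (ex_intro _ c (introT eqP bot_c))).
  by apply/esym/negP => /existsP [p /eqP /(disjoint p c)].
Qed.

Lemma inBot_last (t : F) : inBot t N.+1 = false.
Proof.
rewrite inBotE; apply/existsP => -[c /eqP bot_c].
by have := ltn_ord (botF t c); rewrite bot_c ltnn.
Qed.

Definition top_entries (t : F) := [seq nat_of_ord (topF t p) | p <- enum 'I_(n - j)].
Definition bot_entries (t : F) := [seq nat_of_ord (botF t c) | c <- enum 'I_k].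

Lemma positions_word_of_top (t : F) : isSYT t -> positions true (word_of t) = top_entries t.
Proof.
case/isSYT_props => top_incr _ _ _ _.
apply: (irr_sorted_eq ltn_trans ltnn); rewrite ?sorted_positions ?sorted_map_ord // => u.
rewrite mem_positions size_word_of eqb_id; apply/andP/mapP => [[lt_uN] | [p _ ->]].
  by rewrite nth_word_of // inTopE => /existsP [p /eqP <-]; exists p; rewrite ?mem_enum.
by rewrite nth_word_of // inTopE; split => //; apply/existsP; exists p.
Qed.

Lemma positions_word_of_bot (t : F) : isSYT t -> positions false (word_of t) = bot_entries t.
Proof.
move=> t_SYT; have [_ bot_incr _ _ _] := isSYT_props t_SYT.
apply: (irr_sorted_eq ltn_trans ltnn); rewrite ?sorted_positions ?sorted_map_ord // => u.
rewrite mem_positions size_word_of eqbF_neg; apply/andP/mapP => [[lt_uN] | [c _ ->]].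
  rewrite nth_word_of // -inBot_inTop // inBotE => /existsP [c /eqP <-].
  by exists c; rewrite ?mem_enum.
rewrite nth_word_of // -inBot_inTop // inBotE; split => //.
by apply/existsP; exists c.
Qed.

Hypothesis lt_jn : (j < n)%N.
Hypothesis le_kn : (k <= n)%N.

Lemma count_word_of (t : F) : isSYT t -> count_mem true (word_of t) = (n - j)%N.
Proof.
by move=> t_SYT; rewrite -size_positions positions_word_of_top // size_map size_enum_ord.
Qed.

Lemma ballot_word_of (t : F) : isSYT t -> ballot j (word_of t).
Proof.
move=> t_SYT; have [_ _ _ _ col] := isSYT_props t_SYT.
rewrite /ballot positions_word_of_top // positions_word_of_bot //; apply/allP => c.
rewrite size_map size_enum_ord mem_iota add0n => /andP [_ lt_ck].
apply/implyP => le_jc; have lt_p : (c - j < n - j)%N by lia.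
rewrite size_map size_enum_ord lt_p /=.
rewrite (nth_map_ord (fun p => nat_of_ord (topF t p)) (Ordinal lt_p)).
rewrite (nth_map_ord (fun c => nat_of_ord (botF t c)) (Ordinal lt_ck)).
by apply: col => /=; lia.
Qed.

Lemma head_word_of (t : F) : head false (word_of t) = inTop t 1.
Proof. by rewrite -nth0 nth_word_of //; lia. Qed.

Lemma wdescents_word_of (t : F) : isSYT t -> wdescents (word_of t) = descents t.
Proof.
move=> t_SYT; rewrite /wdescents /descents size_word_of; apply: eq_in_filter => -[|m].
  by rewrite mem_iota.
rewrite mem_iota add1n => /andP [_ le_mN] /=.
rewrite /isDescent nth_word_of //; congr andb.
have [lt_mN | eq_mN] : (m.+1 < N)%N \/ m.+1 = N by lia.
- by rewrite (set_nth_default false) ?size_word_of // nth_word_of // inBot_inTop.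
- by rewrite eq_mN inBot_last nth_default ?size_word_of.
Qed.

Definition tableau_word (w : seq bool) : bool :=
  [&& size w == N, count_mem true w == (n - j)%N & ballot j w].

Lemma tableau_word_of (t : F) : isSYT t -> tableau_word (word_of t).
Proof.
by move=> t_SYT; rewrite /tableau_word size_word_of count_word_of ?ballot_word_of ?eqxx.
Qed.

(* [d] is a dummy default, never reached on words satisfying [tableau_word]. *)
Definition tableau_of (d : 'I_N) (w : seq bool) : F :=
  ([ffun p : 'I_(n - j) => insubd d (nth 0%N (positions true w) p)],
   [ffun c : 'I_k => insubd d (nth 0%N (positions false w) c)]).

Lemma size_positions_tableau_word b w : tableau_word w ->
  size (positions b w) = if b then (n - j)%N else k.
Proof.
case/and3P => /eqP size_w /eqP count_top _; rewrite size_positions.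
by case: b => //; rewrite count_mem_false size_w count_top; lia.
Qed.

Lemma mem_nth_positions b w i : (i < size (positions b w))%N ->
  (nth 0%N (positions b w) i < size w)%N && (nth false w (nth 0%N (positions b w) i) == b).
Proof. by move=> lt_i; rewrite -mem_positions mem_nth. Qed.

Lemma val_tableau_of_top d w (p : 'I_(n - j)) : tableau_word w ->
  nat_of_ord (topF (tableau_of d w) p) = nth 0%N (positions true w) p.
Proof.
move=> w_tab; have /and3P [/eqP size_w _ _] := w_tab.
have lt_p : (p < size (positions true w))%N by rewrite size_positions_tableau_word.
have /andP [lt_pw _] := mem_nth_positions lt_p; rewrite size_w in lt_pw.
by rewrite /tableau_of /topF ffunE val_insubd lt_pw.
Qed.

Lemma val_tableau_of_bot d w (c : 'I_k) : tableau_word w ->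
  nat_of_ord (botF (tableau_of d w) c) = nth 0%N (positions false w) c.
Proof.
move=> w_tab; have /and3P [/eqP size_w _ _] := w_tab.
have lt_c : (c < size (positions false w))%N by rewrite size_positions_tableau_word.
have /andP [lt_cw _] := mem_nth_positions lt_c; rewrite size_w in lt_cw.
by rewrite /tableau_of /botF ffunE val_insubd lt_cw.
Qed.

Lemma index_positions b w (u : 'I_N) : size w = N -> nth false w u = b ->
  exists i : 'I_(size (positions b w)), nth 0%N (positions b w) i = u.
Proof.
move=> size_w w_u; have u_in : nat_of_ord u \in positions b w.
  by rewrite mem_positions size_w ltn_ord w_u eqxx.
by exists (Ordinal (etrans (index_mem _ _) u_in)); rewrite /= nth_index.
Qed.

Lemma tableau_of_SYT d w : tableau_word w -> isSYT (tableau_of d w).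
Proof.
move=> w_tab; have /and3P [/eqP size_w _ w_ballot] := w_tab.
have size_top := size_positions_tableau_word true w_tab.
have size_bot := size_positions_tableau_word false w_tab.
apply/and5P; split.
- apply/forallP => p; apply/forallP => q; apply/implyP => lt_pq.
  rewrite !val_tableau_of_top //; apply: (sorted_ltn_nth ltn_trans) => //;
  by rewrite ?sorted_positions // inE size_top.
- apply/forallP => c; apply/forallP => e; apply/implyP => lt_ce.
  rewrite !val_tableau_of_bot //; apply: (sorted_ltn_nth ltn_trans) => //;
  by rewrite ?sorted_positions // inE size_bot.
- apply/forallP => p; apply/forallP => c; apply/negP => /eqP /(congr1 val) /=.
  rewrite val_tableau_of_top // val_tableau_of_bot // => same.
  have := @mem_nth_positions true w p; rewrite size_top ltn_ord => /(_ isT).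
  have := @mem_nth_positions false w c; rewrite size_bot ltn_ord => /(_ isT).
  case/andP=> _ /eqP bot_c /andP [_ /eqP top_p].
  by rewrite same bot_c in top_p.
- apply/forallP => u; case w_u : (nth false w u).
  + have [i pos_i] := index_positions size_w w_u; rewrite size_top in i pos_i.
    apply/orP; left; apply/existsP; exists i.
    by apply/eqP/val_inj; rewrite /= val_tableau_of_top.
  + have [i pos_i] := index_positions size_w w_u; rewrite size_bot in i pos_i.
    apply/orP; right; apply/existsP; exists i.
    by apply/eqP/val_inj; rewrite /= val_tableau_of_bot.
- apply/forallP => p; apply/forallP => c; apply/implyP => /eqP jp_c.
  rewrite val_tableau_of_top // val_tableau_of_bot //.
  move/allP: w_ballot => /(_ c); rewrite mem_iota size_bot ltn_ord => /(_ isT).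
  by rewrite -jp_c leq_addr addKn /= => /andP [].
Qed.

Lemma word_of_tableau d w : tableau_word w -> word_of (tableau_of d w) = w.
Proof.
move=> w_tab; have /and3P [/eqP size_w _ _] := w_tab.
have size_top := size_positions_tableau_word true w_tab.
apply: (@eq_from_nth _ false); first by rewrite size_word_of size_w.
move=> u; rewrite size_word_of => lt_uN; rewrite nth_word_of // inTopE.
apply/existsP/idP => [[p /eqP <-] | w_u].
  rewrite val_tableau_of_top //.
  have := @mem_nth_positions true w p; rewrite size_top ltn_ord => /(_ isT).
  by case/andP=> _ /eqP.
have [i pos_i] := index_positions (u := Ordinal lt_uN) size_w w_u; rewrite size_top in i pos_i.
by exists i; rewrite val_tableau_of_top // pos_i.
Qed.

Lemma tableau_of_word d (t : F) : isSYT t -> tableau_of d (word_of t) = t.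
Proof.
case: t => T B t_SYT; rewrite /tableau_of positions_word_of_top // positions_word_of_bot //.
by congr pair; apply/ffunP => p; rewrite ffunE nth_map_ord valKd.
Qed.

Lemma perm_word_of_SYT : perm_eq [seq word_of t | t in @isSYT n k j]
                                 [seq w <- words N | tableau_word w].
Proof.
have lt0N : (0 < N)%N by lia.
pose d := Ordinal lt0N.
apply: uniq_perm.
- rewrite map_inj_in_uniq ?enum_uniq // => t t'; rewrite !mem_enum => t_SYT t'_SYT same.
  by rewrite -(tableau_of_word d t_SYT) same tableau_of_word.
- by rewrite filter_uniq // uniq_words.
move=> w; rewrite mem_filter mem_words; apply/mapP/andP => [[t t_SYT ->] | [w_tab _]].
  by rewrite mem_enum in t_SYT; rewrite tableau_word_of // size_word_of.
exists (tableau_of d w); last by rewrite word_of_tableau.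
by rewrite mem_enum; apply: tableau_of_SYT.
Qed.

Lemma fstar_wgen i : fstar n k j i = wgen j (n - j) k i.
Proof.
pose G w : {poly rat} := if (wdes w == i) && head false w then 'X^(wmaj w) else 0.
transitivity (\sum_(w <- [seq word_of t | t in @isSYT n k j]) G w).
  rewrite big_image /fstar big_mkcondr; apply: eq_big => // t t_SYT.
  by rewrite /G /wdes /wmaj wdescents_word_of // head_word_of.
rewrite (perm_big _ perm_word_of_SYT) big_filter /wgen; have -> : (n - j + k = N)%N by lia.
rewrite big_mkcond [RHS]big_mkcond; apply: eq_big_seq => w; rewrite mem_words => size_w.
rewrite /tableau_word size_w /admissible /G.
by case: (count_mem true w == _); case: (head false w); case: (ballot j w); case: (wdes w == i).
Qed.

End Tableaux.

Theorem mainTheorem4 (n k j i : nat) :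
  (1 <= k)%N -> (k <= n)%N -> (j < n)%N -> (1 <= i)%N ->
  fstar n k j i =
  'X^(i ^ 2) *
    (qbinom (n - j) i * qbinom (k - 1) (i - 1)
     - qbinom n (i - 1) * qbinom (k - j - 1) i).
Proof.
move=> k_gt0 le_kn lt_jn i_gt0.
rewrite fstar_wgen // wgen_closed_form; try lia.
rewrite /closed_form /qbin_sub !qbinomE subnK ?(ltnW lt_jn) // k_gt0 !subn1 subnS.
by case: ltnP => // le_kj; rewrite (@qbin_small (k - j).-1 i) //; lia.
Qed.
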